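(* Let $\mathbb{R}^4_+ := \{x \in \mathbb{R}^4 : x_2^2 + x_3^2 + x_4^2 \le 2x_1x_2,\ x_1 \ge 0\}$ and let $A$ be the block diagonal matrix with rows $(0,1,0,0),(0,0,0,0),(0,0,0,4\pi),(0,0,-\pi,0)$. Identifying $(\mathbb{R}^4)'$ with $\mathbb{R}^4$ via the standard inner product, the dual cone is $\{x : x_3^2 + x_4^2 \le x_1^2 + 2x_1x_2,\ x_1\ge -x_2\}$, and both $(e^{tA})_{t\ge0}$ (with respect to $\mathbb{R}^4_+$) and its dual semigroup $(e^{tA^T})_{t\ge0}$ (with respect to the dual cone) are individually eventually nonnegative, while $(e^{tA})_{t\ge0}$ is not uniformly eventually nonnegative.
   Context: For a finite-dimensional real vector space $X$ ordered by a closed cone $X_+$ with non-empty interior and $A: X\to X$ linear, $(e^{tA})_{t\ge0}$ is individually eventually nonnegative if for each $x\in X_+$ there is $t_0\ge0$ with $e^{tA}x\in X_+$ for all $t\ge t_0$; uniformly eventually nonnegative if there is $t_0\ge0$ with $e^{tA}X_+\subseteq X_+$ for all $t\ge t_0$. The dual cone is $X'_+ := \{x' : \langle x', x\rangle\ge0\ \forall x\in X_+\}$. *)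

From HB Require Import structures.
From mathcomp Require Import all_boot all_order all_algebra.
From mathcomp Require Import all_classical all_reals all_analysis.
Set Implicit Arguments. Unset Strict Implicit. Unset Printing Implicit Defensive.
Import Order.TTheory GRing.Theory Num.Theory.
Local Open Scope classical_set_scope.
Local Open Scope ring_scope.

Definition mexp (R : realType) (n : nat) (M : 'M[R]_n) : 'M[R]_n :=
  \matrix_(i, j) limn (fun N : nat => \sum_(k < N) ((k`!)%:R^-1 * (M ^+ k) i j)).

Definition ip (R : realType) (n : nat) (y x : 'cV[R]_n) : R := \sum_i y i 0 * x i 0.

Definition dual_cone (R : realType) (n : nat) (C : set 'cV[R]_n) : set 'cV[R]_n :=
  [set y | forall x, C x -> 0 <= ip y x].

Definition indiv_ev_nonneg (R : realType) (n : nat) (C : set 'cV[R]_n) (A : 'M[R]_n) :=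
  forall x, C x -> exists t0 : R, 0 <= t0 /\
    forall t : R, t0 <= t -> C (mexp (t *: A) *m x).

Definition unif_ev_nonneg (R : realType) (n : nat) (C : set 'cV[R]_n) (A : 'M[R]_n) :=
  exists t0 : R, 0 <= t0 /\
    forall t : R, t0 <= t -> forall x, C x -> C (mexp (t *: A) *m x).

(* Coordinates x_1..x_4 of the paper are entries 0..3 here. *)
Definition K4 (R : realType) : set 'cV[R]_4 :=
  [set x | (x 1 0) ^+ 2 + (x 2 0) ^+ 2 + (x 3 0) ^+ 2 <= 2 * x 0 0 * x 1 0
           /\ 0 <= x 0 0].

Definition K4dual (R : realType) : set 'cV[R]_4 :=
  [set x | (x 2 0) ^+ 2 + (x 3 0) ^+ 2 <= (x 0 0) ^+ 2 + 2 * x 0 0 * x 1 0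
           /\ - x 1 0 <= x 0 0].

Definition A4 (R : realType) : 'M[R]_4 :=
  \matrix_(i < 4, j < 4)
    (if (i == 0 :> nat) && (j == 1 :> nat) then 1
     else if (i == 2 :> nat) && (j == 3 :> nat) then 4 * pi
     else if (i == 3 :> nat) && (j == 2 :> nat) then - pi
     else 0).

Arguments K4 R : clear implicits.
Arguments K4dual R : clear implicits.
Arguments A4 R : clear implicits.

From HB Require Import structures.
From mathcomp Require Import all_boot all_order all_algebra.
From mathcomp Require Import all_classical all_reals all_analysis.
From mathcomp Require Import ring lra.
Import Order.TTheory GRing.Theory Num.Theory.
Import numFieldNormedType.Exports.
Local Open Scope classical_set_scope.
Local Open Scope ring_scope.

(* The matrix A = A4 is block diagonal: a nilpotent Jordan block on the
   coordinates 0,1 and the generator of "elliptic rotations" on 2,3.  Hence,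
   with th = 2 pi t,
     e^{tA} = [[1, t], [0, 1]]  (+)  [[cos th, 2 sin th], [-(sin th)/2, cos th]].
   The rotation block preserves the form a^2 + 4 b^2 and thus enlarges
   Euclidean length by at most a factor 2.  The dual cone is computed by
   Cauchy-Schwarz (one inclusion) and by testing against explicit elements of
   the cone (the other).  Individual eventual nonnegativity, for K4 and for its
   dual, follows because one coordinate grows linearly in t while the rotated
   part stays bounded.  Uniform eventual nonnegativity fails at the times
   t = n + 1/4, where the rotation block is [[0, 2], [-1/2, 0]], on the vectors
   (t + 1, 1/(t + 1), 0, 1) of K4. *)

Lemma limn_exp_series {R : realType} {f g : nat -> R} {a l v : R} :
  (forall k, (k`!%:R)^-1 * f k = a * g k) -> series g @ \oo --> l -> v = a * l ->
  limn (fun N : nat => \sum_(k < N) ((k`!)%:R^-1 * f k)) = v.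
Proof.
move=> fg g_cvg ->; apply: cvg_lim; first exact: Rhausdorff.
have -> : (fun N : nat => \sum_(k < N) ((k`!)%:R^-1 * f k)) =
          (fun N => a * series g N).
  apply/funext => N; rewrite /series /= big_mkord mulr_sumr.
  by apply: eq_bigr => k _; exact: fg.
exact: cvgMl_tmp.
Qed.

Lemma cvg_series_cos {R : realType} (x : R) : series (cos_coeff x) @ \oo --> cos x.
Proof. by rewrite cos.unlock; exact: is_cvg_series_cos_coeff. Qed.

Lemma cvg_series_sin {R : realType} (x : R) : series (sin_coeff x) @ \oo --> sin x.
Proof. by rewrite sin.unlock; exact: is_cvg_series_sin_coeff. Qed.

Lemma cvg_series_indicator (R : realType) (m : nat) :
  series (fun k => (k == m)%:R : R) @ \oo --> (1 : R).
Proof.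
have partial N : series (fun k => (k == m)%:R : R) N = (m < N)%:R.
  elim: N => [|N IH]; first by rewrite /series /= big_geq.
  move: IH; rewrite /series /= big_nat_recr //= => ->.
  by rewrite ltnS; case: (ltngtP m N); rewrite /= ?addr0 ?add0r.
apply: cvg_near_cst; exists m.+1 => // N /= hN.
by rewrite partial hN.
Qed.

Lemma trmx_expr {R : comPzRingType} (n : nat) (M : 'M[R]_n) (k : nat) :
  (M^T) ^+ k = (M ^+ k)^T.
Proof.
elim: k => [|k IH]; first by rewrite !expr0 trmx1.
by rewrite exprSr IH exprS -!mulmxE trmx_mul.
Qed.

Lemma mexp_trmx {R : realType} (n : nat) (M : 'M[R]_n) : mexp M^T = (mexp M)^T.
Proof.
apply/matrixP => i j; rewrite !mxE; congr (limn _); apply/funext => N.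
by apply: eq_bigr => k _; rewrite trmx_expr mxE.
Qed.

Lemma rot_block_form {R : realFieldType} (c s a b : R) : c ^+ 2 + s ^+ 2 = 1 ->
  (c * a + 2 * s * b) ^+ 2 + 4 * (- (s / 2) * a + c * b) ^+ 2 = a ^+ 2 + 4 * b ^+ 2.
Proof.
move=> cs1; transitivity ((c ^+ 2 + s ^+ 2) * (a ^+ 2 + 4 * b ^+ 2)); first by field.
by rewrite cs1 mul1r.
Qed.

Lemma ellipse_form_bound {R : realFieldType} (a b P Q : R) :
  P ^+ 2 + 4 * Q ^+ 2 = a ^+ 2 + 4 * b ^+ 2 -> P ^+ 2 + Q ^+ 2 <= 4 * (a ^+ 2 + b ^+ 2).
Proof. by move=> e; have := sqr_ge0 Q; have := sqr_ge0 a; lra. Qed.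

Lemma lorentz_pairing_ge0 {R : realFieldType} (a b v1 v2 v3 w1 w2 w3 : R) :
  0 <= a -> 0 <= b -> v1 ^+ 2 + v2 ^+ 2 + v3 ^+ 2 <= a ^+ 2 ->
  w1 ^+ 2 + w2 ^+ 2 + w3 ^+ 2 <= b ^+ 2 ->
  0 <= a * b + (v1 * w1 + v2 * w2 + v3 * w3).
Proof.
move=> a0 b0 hv hw.
have lagrange : (v1 ^+ 2 + v2 ^+ 2 + v3 ^+ 2) * (w1 ^+ 2 + w2 ^+ 2 + w3 ^+ 2) =
    (v1 * w1 + v2 * w2 + v3 * w3) ^+ 2 + ((v1 * w2 - v2 * w1) ^+ 2
      + (v1 * w3 - v3 * w1) ^+ 2 + (v2 * w3 - v3 * w2) ^+ 2) by ring.
have cauchy_schwarz : (v1 * w1 + v2 * w2 + v3 * w3) ^+ 2 <=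
    (v1 ^+ 2 + v2 ^+ 2 + v3 ^+ 2) * (w1 ^+ 2 + w2 ^+ 2 + w3 ^+ 2).
  by rewrite lagrange lerDl !addr_ge0 ?sqr_ge0.
have norms : (v1 ^+ 2 + v2 ^+ 2 + v3 ^+ 2) * (w1 ^+ 2 + w2 ^+ 2 + w3 ^+ 2) <= (a * b) ^+ 2.
  by rewrite exprMn; apply: ler_pM; rewrite ?addr_ge0 ?sqr_ge0.
have ab0 : 0 <= a * b by rewrite mulr_ge0.
move: (le_trans cauchy_schwarz norms) ab0.
move: (v1 * w1 + v2 * w2 + v3 * w3) (a * b) => d p; nra.
Qed.

(* If q <= a s for every s >= 0 with q <= s^2, then q <= a^2 (take s = sqrt q). *)
Lemma sqr_le_of_tests {R : realType} {a q : R} :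
  0 <= a -> 0 <= q -> (forall s, 0 <= s -> q <= s ^+ 2 -> q <= a * s) -> q <= a ^+ 2.
Proof.
move=> a0 q0 tests.
have r0 : 0 <= Num.sqrt q := sqrtr_ge0 q.
have rq : Num.sqrt q ^+ 2 = q := sqr_sqrtr q0.
have := tests _ r0; rewrite rq lexx => /(_ isT); rewrite -{1}rq expr2.
have [r_eq0|rpos] := eqVneq (Num.sqrt q) 0.
  by move=> _; rewrite -rq r_eq0 expr0n /= sqr_ge0.
rewrite ler_pM2r ?lt_def ?rpos // => ra.
by rewrite -rq lerXn2r // nnegrE.
Qed.

Lemma ord4_cases (i : 'I_4) : i = 0 \/ i = 1 \/ i = 2 \/ i = 3.
Proof.
case: i => [[|[|[|[|m]]]] lt_i4] //.
- by left; apply: val_inj.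
- by right; left; apply: val_inj.
- by right; right; left; apply: val_inj.
- by right; right; right; apply: val_inj.
Qed.

Lemma sum_ord4 {V : nmodType} (f : 'I_4 -> V) :
  \sum_i f i = f 0 + f 1 + f 2 + f 3.
Proof.
rewrite !big_ord_recl big_ord0 addr0 !addrA.
by congr (_ + _ + _ + _); congr f; apply: val_inj.
Qed.

Definition col4 {R : realType} (a b c d : R) : 'cV[R]_4 :=
  \col_(i < 4) [:: a; b; c; d]`_i.

Lemma ip4E {R : realType} (y x : 'cV[R]_4) :
  ip y x = y 0 0 * x 0 0 + y 1 0 * x 1 0 + y 2 0 * x 2 0 + y 3 0 * x 3 0.
Proof. by rewrite /ip sum_ord4. Qed.

Lemma ip_col4 {R : realType} (y : 'cV[R]_4) (a b c d : R) :
  ip y (col4 a b c d) = y 0 0 * a + y 1 0 * b + y 2 0 * c + y 3 0 * d.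
Proof. by rewrite ip4E !mxE. Qed.

Lemma K4_col4 {R : realType} (a b c d : R) :
  K4 R (col4 a b c d) = (b ^+ 2 + c ^+ 2 + d ^+ 2 <= 2 * a * b /\ 0 <= a).
Proof. by rewrite /K4 /= !mxE. Qed.

(* k! times the k-th coefficient of the cosine and sine series at th. *)
Definition cos_term {R : comPzRingType} (th : R) (k : nat) : R :=
  (~~ odd k)%:R * (-1) ^+ k./2 * th ^+ k.
Definition sin_term {R : comPzRingType} (th : R) (k : nat) : R :=
  (odd k)%:R * (-1) ^+ k.-1./2 * th ^+ k.

Lemma trig_term_succ {R : comPzRingType} (th : R) (k : nat) :
  cos_term th k.+1 = - th * sin_term th k /\ sin_term th k.+1 = th * cos_term th k.
Proof.
rewrite /cos_term /sin_term -[k]odd_double_half.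
case: (odd k) => /=; move: (k./2) => m;
  rewrite add0n /= ?odd_double ?doubleK ?uphalf_double /=;
  by split; rewrite ?exprS; ring.
Qed.

Definition tA4_pow {R : realType} (t : R) (k : nat) : 'M[R]_4 :=
  \matrix_(i < 4, j < 4)
   (if (i == 0 :> nat) && (j == 0 :> nat) then (k == 0)%:R
    else if (i == 0 :> nat) && (j == 1 :> nat) then t * (k == 1)%:R
    else if (i == 1 :> nat) && (j == 1 :> nat) then (k == 0)%:R
    else if (i == 2 :> nat) && (j == 2 :> nat) then cos_term (2 * pi * t) k
    else if (i == 2 :> nat) && (j == 3 :> nat) then 2 * sin_term (2 * pi * t) k
    else if (i == 3 :> nat) && (j == 2 :> nat) then - (sin_term (2 * pi * t) k / 2)
    else if (i == 3 :> nat) && (j == 3 :> nat) then cos_term (2 * pi * t) k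
    else 0).

Lemma tA4_powE {R : realType} (t : R) (k : nat) : (t *: A4 R) ^+ k = tA4_pow t k.
Proof.
elim: k => [|k IH].
  rewrite expr0; apply/matrixP => i j.
  have [->|[->|[->|->]]] := ord4_cases i; have [->|[->|[->|->]]] := ord4_cases j;
    by rewrite !mxE /= /cos_term /sin_term /=; ring.
rewrite exprSr IH; apply/matrixP => i j.
have [cos_succ sin_succ] := trig_term_succ (2 * pi * t) k.
have [->|[->|[->|->]]] := ord4_cases i; have [->|[->|[->|->]]] := ord4_cases j;
  rewrite !mxE sum_ord4 !mxE /= ?cos_succ ?sin_succ; try ring; by field.
Qed.

Definition expA4 {R : realType} (t : R) : 'M[R]_4 :=
  \matrix_(i < 4, j < 4)
   (if (i == 0 :> nat) && (j == 0 :> nat) then 1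
    else if (i == 0 :> nat) && (j == 1 :> nat) then t
    else if (i == 1 :> nat) && (j == 1 :> nat) then 1
    else if (i == 2 :> nat) && (j == 2 :> nat) then cos (2 * pi * t)
    else if (i == 2 :> nat) && (j == 3 :> nat) then 2 * sin (2 * pi * t)
    else if (i == 3 :> nat) && (j == 2 :> nat) then - (sin (2 * pi * t) / 2)
    else if (i == 3 :> nat) && (j == 3 :> nat) then cos (2 * pi * t)
    else 0).

(* e^{tA} = expA4 t: each entry of the exponential series is a multiple of
   the series of cos, of sin or of an indicator sequence (or vanishes). *)
Lemma mexp_tA4 {R : realType} (t : R) : mexp (t *: A4 R) = expA4 t.
Proof.
apply/matrixP => i j; rewrite /mexp mxE.
under eq_fun => N do under eq_bigr => k _ do rewrite tA4_powE.
have zero_entry (f : nat -> R) : (forall k, f k = 0) ->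
    limn (fun N : nat => \sum_(k < N) ((k`!)%:R^-1 * f k)) = 0.
  move=> f0; apply: (limn_exp_series (f := f) (a := 0) _ (cvg_series_indicator R 0)).
  - by move=> k; rewrite f0 !mulr0 mul0r.
  - by rewrite mul0r.
have [->|[->|[->|->]]] := ord4_cases i; have [->|[->|[->|->]]] := ord4_cases j;
  rewrite [RHS]mxE /=;
  try (by apply: (zero_entry (fun k => tA4_pow t k _ _)) => k; rewrite mxE).
- apply: (limn_exp_series (f := fun k => tA4_pow t k 0 0) (a := 1) _
          (cvg_series_indicator R 0)); last by rewrite mulr1.
  by move=> [|k]; rewrite mxE /= ?mulr0 ?invr1 ?mul1r.
- apply: (limn_exp_series (f := fun k => tA4_pow t k 0 1) (a := t) _
          (cvg_series_indicator R 1)); last by rewrite mulr1.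
  by move=> [|[|k]]; rewrite mxE /= ?mulr0 ?invr1 ?mul1r // mulrC.
- apply: (limn_exp_series (f := fun k => tA4_pow t k 1 1) (a := 1) _
          (cvg_series_indicator R 0)); last by rewrite mulr1.
  by move=> [|k]; rewrite mxE /= ?mulr0 ?invr1 ?mul1r.
- apply: (limn_exp_series (f := fun k => tA4_pow t k 2 2) (a := 1) _
          (cvg_series_cos (2 * pi * t))); last by rewrite mul1r.
  by move=> k; rewrite mxE /= /cos_term /cos_coeff /= -exprnP; ring.
- apply: (limn_exp_series (f := fun k => tA4_pow t k 2 3) (a := 2) _
          (cvg_series_sin (2 * pi * t))) => // k.
  rewrite mxE /= /sin_term /sin_coeff /= -?exprnP.
  by move: ((-1 : R) ^+ k.-1./2) => e; ring.
- apply: (limn_exp_series (f := fun k => tA4_pow t k 3 2) (a := - 2^-1) _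
          (cvg_series_sin (2 * pi * t))); last by rewrite mulNr mulrC.
  move=> k; rewrite mxE /= /sin_term /sin_coeff /= -?exprnP.
  by move: ((-1 : R) ^+ k.-1./2) => e; ring.
- apply: (limn_exp_series (f := fun k => tA4_pow t k 3 3) (a := 1) _
          (cvg_series_cos (2 * pi * t))); last by rewrite mul1r.
  by move=> k; rewrite mxE /= /cos_term /cos_coeff /= -?exprnP; ring.
Qed.

Lemma expA4_mulmx {R : realType} (t : R) (x : 'cV[R]_4) :
  let c := cos (2 * pi * t) in let s := sin (2 * pi * t) in
  (expA4 t *m x) 0 0 = x 0 0 + t * x 1 0 /\ (expA4 t *m x) 1 0 = x 1 0 /\
  (expA4 t *m x) 2 0 = c * x 2 0 + 2 * s * x 3 0 /\
  (expA4 t *m x) 3 0 = - (s / 2) * x 2 0 + c * x 3 0.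
Proof. by rewrite /= !mxE !sum_ord4 !mxE /=; split; [|split; [|split]]; ring. Qed.

Lemma expA4T_mulmx {R : realType} (t : R) (y : 'cV[R]_4) :
  let c := cos (2 * pi * t) in let s := sin (2 * pi * t) in
  ((expA4 t)^T *m y) 0 0 = y 0 0 /\ ((expA4 t)^T *m y) 1 0 = t * y 0 0 + y 1 0 /\
  ((expA4 t)^T *m y) 2 0 = c * y 2 0 - s / 2 * y 3 0 /\
  ((expA4 t)^T *m y) 3 0 = 2 * s * y 2 0 + c * y 3 0.
Proof. by rewrite /= !mxE !sum_ord4 !mxE /=; split; [|split; [|split]]; ring. Qed.

Lemma rot_block_bound {R : realType} (th a b : R) :
  (cos th * a + 2 * sin th * b) ^+ 2 + (- (sin th / 2) * a + cos th * b) ^+ 2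
   <= 4 * (a ^+ 2 + b ^+ 2).
Proof. exact/ellipse_form_bound/rot_block_form/cos2Dsin2. Qed.

(* The transposed block is the original one conjugated by the swap of axes. *)
Lemma rot_block_boundT {R : realType} (th a b : R) :
  (cos th * a - sin th / 2 * b) ^+ 2 + (2 * sin th * a + cos th * b) ^+ 2
   <= 4 * (a ^+ 2 + b ^+ 2).
Proof.
have swap : (cos th * a - sin th / 2 * b) ^+ 2 + (2 * sin th * a + cos th * b) ^+ 2
  = (cos th * b + 2 * sin th * a) ^+ 2 + (- (sin th / 2) * b + cos th * a) ^+ 2 by ring.
by rewrite swap [a ^+ 2 + _]addrC; apply: rot_block_bound.
Qed.

(* K4dual pairs nonnegatively with K4: the changes of variables
   y |-> (y0 + y1; y1, y2, y3) and x |-> (x0; x1 - x0, x2, x3) send both cones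
   into the Lorentz cone. *)
Lemma K4dual_sub_dual (R : realType) : K4dual R `<=` dual_cone (K4 R).
Proof.
move=> y [hy1 hy2] x [hx1 hx2]; rewrite ip4E.
have -> : y 0 0 * x 0 0 + y 1 0 * x 1 0 + y 2 0 * x 2 0 + y 3 0 * x 3 0 =
    (y 0 0 + y 1 0) * x 0 0
    + (y 1 0 * (x 1 0 - x 0 0) + y 2 0 * x 2 0 + y 3 0 * x 3 0) by ring.
by apply: lorentz_pairing_ge0; [lra | lra | nra | nra].
Qed.

(* Testing y against (1, 1, 0, 0) and (s, s - y1, -y2, -y3) recovers the
   inequalities defining K4dual. *)
Lemma dual_sub_K4dual (R : realType) : dual_cone (K4 R) `<=` K4dual R.
Proof.
move=> y y_dual.
set a := y 0 0 + y 1 0; set q := y 1 0 ^+ 2 + y 2 0 ^+ 2 + y 3 0 ^+ 2.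
have a_ge0 : 0 <= a.
  have := y_dual (col4 1 1 0 0); rewrite K4_col4 ip_col4 => pairing.
  by rewrite /a; have := pairing (conj _ _); lra.
have q_ge0 : 0 <= q by rewrite /q !addr_ge0 ?sqr_ge0.
have tests s : 0 <= s -> q <= s ^+ 2 -> q <= a * s.
  move=> s0 hs; have := y_dual (col4 s (s - y 1 0) (- y 2 0) (- y 3 0)).
  rewrite K4_col4 ip_col4 /a => pairing.
  have := pairing (conj _ s0); rewrite /q in hs *; nra.
have := sqr_le_of_tests a_ge0 q_ge0 tests.
by rewrite /a /q in a_ge0 * => hq; split; nra.
Qed.

Lemma dual_K4 (R : realType) : dual_cone (K4 R) = K4dual R.
Proof. by rewrite eqEsubset; split; [exact: dual_sub_K4dual | exact: K4dual_sub_dual]. Qed.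

(* e^{tA} x enters K4 once t x1^2 >= 2 |(x2, x3)|^2: the first coordinate grows
   like t x1 while the rotated part has squared norm at most 4 |(x2, x3)|^2;
   when x1 = 0, membership in K4 forces x2 = x3 = 0. *)
Lemma indiv_K4 (R : realType) : indiv_ev_nonneg (K4 R) (A4 R).
Proof.
move=> x [hx1 hx2].
have x1_ge0 : 0 <= x 1 0 by nra.
set r := x 2 0 ^+ 2 + x 3 0 ^+ 2.
have r_ge0 : 0 <= r by rewrite /r addr_ge0 ?sqr_ge0.
have t0_ge0 : 0 <= 2 * r / x 1 0 ^+ 2 by rewrite divr_ge0 ?sqr_ge0 ?mulr_ge0.
exists (2 * r / x 1 0 ^+ 2); split => // t ht.
have t_ge0 : 0 <= t := le_trans t0_ge0 ht.
have growth : 2 * r <= t * x 1 0 ^+ 2.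
  have [x1_eq0|x1_neq0] := eqVneq (x 1 0) 0.
    have : r <= 0 by rewrite /r; move: hx1; rewrite x1_eq0; lra.
    by rewrite x1_eq0 expr0n /= mulr0; lra.
  by rewrite -ler_pdivrMr // exprn_gt0 // lt_def x1_neq0 x1_ge0.
rewrite mexp_tA4 /K4 /=; have [-> [-> [-> ->]]] := expA4_mulmx t x.
have := rot_block_bound (2 * pi * t) (x 2 0) (x 3 0); rewrite -/r => rot.
by split; nra.
Qed.

(* Dually, e^{tA^T} y enters K4dual once t y0 is large: the second coordinate
   grows like t y0 while the rotated part stays bounded; y0 = 0 forces
   y2 = y3 = 0. *)
Lemma indiv_dual_K4 (R : realType) : indiv_ev_nonneg (dual_cone (K4 R)) (A4 R)^T.
Proof.
rewrite dual_K4 => y [hy1 hy2].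
have y0_ge0 : 0 <= y 0 0 by nra.
set r := y 2 0 ^+ 2 + y 3 0 ^+ 2.
have r_ge0 : 0 <= r by rewrite /r addr_ge0 ?sqr_ge0.
set w := 4 * r + y 0 0 * (y 1 0 ^+ 2 + 1).
have w_ge0 : 0 <= w by rewrite /w addr_ge0 ?mulr_ge0 ?addr_ge0 ?sqr_ge0.
have t0_ge0 : 0 <= w / y 0 0 ^+ 2 by rewrite divr_ge0 ?sqr_ge0.
exists (w / y 0 0 ^+ 2); split => // t ht.
have t_ge0 : 0 <= t := le_trans t0_ge0 ht.
have -> : t *: (A4 R)^T = (t *: A4 R)^T by rewrite linearZ.
rewrite mexp_trmx mexp_tA4 /K4dual /=; have [-> [-> [-> ->]]] := expA4T_mulmx t y.
have := rot_block_boundT (2 * pi * t) (y 2 0) (y 3 0); rewrite -/r => rot.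
have [y0_eq0|y0_neq0] := eqVneq (y 0 0) 0.
  have : r <= 0 by rewrite /r; move: hy1; rewrite y0_eq0; lra.
  by move: rot hy2; rewrite y0_eq0; split; nra.
have y0_gt0 : 0 < y 0 0 by rewrite lt_def y0_neq0 y0_ge0.
have growth : w <= t * y 0 0 ^+ 2 by rewrite -ler_pdivrMr // exprn_gt0.
have growth1 : y 1 0 ^+ 2 + 1 <= t * y 0 0.
  by rewrite -(ler_pM2l y0_gt0); move: growth; rewrite /w; nra.
by move: growth; rewrite /w; split; nra.
Qed.

(* At t = n + 1/4 the rotation block is [[0, 2], [-1/2, 0]], and it maps
   (t + 1, 1/(t + 1), 0, 1) in K4 outside K4; such t are arbitrarily large. *)
Lemma not_unif_K4 (R : realType) : ~ unif_ev_nonneg (K4 R) (A4 R).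
Proof.
move=> [t0 [t0_ge0 unif]].
have [n t0_le_n] : exists n : nat, t0 <= n%:R.
  by exists (Num.bound t0); apply: ltW; apply: archi_boundP.
set t : R := n%:R + 4^-1.
have quarter_gt0 : (0 : R) < 4^-1 by rewrite invr_gt0.
have t0_le_t : t0 <= t by rewrite /t; lra.
have angle : 2 * pi * t = pi / 2 + (pi *+ 2) *+ n.
  by rewrite /t -mulrnA -mulr_natr; field.
have cos_t : cos (2 * pi * t) = 0 by rewrite angle (periodicn (@cosD2pi R)) cos_pihalf.
have sin_t : sin (2 * pi * t) = 1 by rewrite angle (periodicn (@sinD2pi R)) sin_pihalf.
set s := (t + 1)^-1.
have ts : (t + 1) * s = 1 by rewrite /s mulfV //; apply/eqP => e; lra.
have s_gt0 : 0 < s by rewrite /s invr_gt0; lra.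
have x_K4 : K4 R (col4 (t + 1) s 0 1) by rewrite K4_col4; split; nra.
have := unif t t0_le_t _ x_K4; rewrite mexp_tA4 /K4 /=.
have [-> [-> [-> ->]]] := expA4_mulmx t (col4 (t + 1) s 0 1).
rewrite cos_t sin_t !mxE /= => -[not_K4 _].
have ts' : t * s = 1 - s by nra.
have expand : 2 * (t + 1 + t * s) * s = 2 + 2 * (1 - s) * s.
  have -> : 2 * (t + 1 + t * s) * s = 2 * ((t + 1) * s) + 2 * (t * s) * s by ring.
  by rewrite ts ts' mulr1.
move: not_K4; rewrite expand; nra.
Qed.

Theorem mainTheorem6 (R : realType) :
  dual_cone (K4 R) = K4dual R /\
  indiv_ev_nonneg (K4 R) (A4 R) /\
  indiv_ev_nonneg (dual_cone (K4 R)) (A4 R)^T /\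
  ~ unif_ev_nonneg (K4 R) (A4 R).
Proof.
split; first exact: dual_K4.
split; first exact: indiv_K4.
split; first exact: indiv_dual_K4.
exact: not_unif_K4.
Qed.
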